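(* Let $\mathcal{C}$ be a fibration category and $f\colon A\to B$ an acyclic fibration. Then the pullback functor $f^*\colon(\mathcal{C}\twoheadrightarrow B)\to(\mathcal{C}\twoheadrightarrow A)$ is a weak equivalence of fibration categories.
   Context: A fibration category is a category with wide subcategories of fibrations and weak equivalences such that: weak equivalences satisfy 2-out-of-6; isomorphisms are acyclic fibrations (maps that are both fibrations and weak equivalences); pullbacks along fibrations exist and fibrations and acyclic fibrations are stable under pullback; there is a terminal object and all objects are fibrant; every map factors as a weak equivalence followed by a fibration. For an object $A$, $\mathcal{C}\twoheadrightarrow A$ is the full subcategory of the slice $\mathcal{C}/A$ on fibrations $X\to A$, with fibrations and weak equivalences created by the forgetful functor to $\mathcal{C}$; it is a fibration category. An exact functor preserves fibrations, acyclic fibrations, pullbacks along fibrations and the terminal object; an exact functor is a weak equivalence of fibration categories if it induces an equivalence of homotopy categories (localizations at the weak equivalences). *)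

From Stdlib Require Import ProofIrrelevance.

Record Category := {
  Ob : Type;
  Hom : Ob -> Ob -> Type;
  idm : forall x, Hom x x;
  comp : forall x y z, Hom y z -> Hom x y -> Hom x z;
  comp_idl : forall x y (f : Hom x y), comp x y y (idm y) f = f;
  comp_idr : forall x y (f : Hom x y), comp x x y f (idm x) = f;
  comp_assoc : forall w x y z (f : Hom w x) (g : Hom x y) (h : Hom y z),
      comp w y z h (comp w x y g f) = comp w x z (comp x y z h g) f }.

Arguments Hom {c} _ _.
Arguments idm {c} x.
Arguments comp {c x y z} _ _.

Record Functor (C D : Category) := {
  fob : Ob C -> Ob D;
  fmor : forall x y, @Hom C x y -> @Hom D (fob x) (fob y);
  fmor_id : forall x, fmor x x (idm x) = idm (fob x);
  fmor_comp : forall x y z (f : @Hom C x y) (g : @Hom C y z),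
      fmor x z (comp g f) = comp (fmor y z g) (fmor x y f) }.

Arguments fob {C D} _ _.
Arguments fmor {C D} _ {x y} _.

(** Pullback squares:    P --g--> X
                         |        |
                        p'        p
                         v        v
                         A --f--> B                                        *)
Definition IsPullback {C : Category} {X A B P : Ob C}
  (p : Hom X B) (f : Hom A B) (p' : Hom P A) (g : Hom P X) : Prop :=
  comp p g = comp f p' /\
  forall (Q : Ob C) (a : Hom Q A) (x : Hom Q X), comp p x = comp f a ->
    exists u : Hom Q P, (comp p' u = a /\ comp g u = x) /\
      forall v : Hom Q P, comp p' v = a -> comp g v = x -> v = u.

Definition IsTerminal {C : Category} (t : Ob C) : Prop :=
  forall X : Ob C, exists u : Hom X t, forall v : Hom X t, v = u.

Record FCat := {
  fcat :> Category;
  fib : forall x y : Ob fcat, Hom x y -> Prop;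
  weq : forall x y : Ob fcat, Hom x y -> Prop }.

Arguments fib {f x y} _.
Arguments weq {f x y} _.

Record IsFibrationCategory (C : FCat) : Prop := {
  fc_fib_id : forall x : Ob C, fib (idm x);
  fc_weq_id : forall x : Ob C, weq (idm x);
  fc_fib_comp : forall (x y z : Ob C) (f : Hom x y) (g : Hom y z),
      fib f -> fib g -> fib (comp g f);
  fc_weq_comp : forall (x y z : Ob C) (f : Hom x y) (g : Hom y z),
      weq f -> weq g -> weq (comp g f);
  fc_2of6 : forall (w x y z : Ob C) (f : Hom w x) (g : Hom x y) (h : Hom y z),
      weq (comp g f) -> weq (comp h g) ->
      weq f /\ weq g /\ weq h /\ weq (comp h (comp g f));
  fc_iso : forall (x y : Ob C) (f : Hom x y) (g : Hom y x),
      comp g f = idm x -> comp f g = idm y -> fib f /\ weq f;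
  fc_pb_exists : forall (X A B : Ob C) (p : Hom X B) (f : Hom A B), fib p ->
      exists (P : Ob C) (p' : Hom P A) (g : Hom P X), IsPullback p f p' g;
  fc_pb_fib : forall (X A B P : Ob C) (p : Hom X B) (f : Hom A B)
      (p' : Hom P A) (g : Hom P X), fib p -> IsPullback p f p' g -> fib p';
  fc_pb_afib : forall (X A B P : Ob C) (p : Hom X B) (f : Hom A B)
      (p' : Hom P A) (g : Hom P X), fib p -> weq p -> IsPullback p f p' g -> weq p';
  fc_terminal : exists t : Ob C, IsTerminal t;
  fc_fibrant : forall (X t : Ob C), IsTerminal t -> forall u : Hom X t, fib u;
  fc_factor : forall (x y : Ob C) (f : Hom x y),
      exists (z : Ob C) (w : Hom x z) (p : Hom z y), weq w /\ fib p /\ f = comp p w }.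

Section Slice.
Variables (C : FCat) (A : Ob C).

Definition slice_ob := {X : Ob C & {p : Hom X A | fib p}}.
Definition sl_obj (X : slice_ob) : Ob C := projT1 X.
Definition sl_map (X : slice_ob) : Hom (sl_obj X) A := proj1_sig (projT2 X).

Definition slice_hom (X Y : slice_ob) :=
  {h : Hom (sl_obj X) (sl_obj Y) | comp (sl_map Y) h = sl_map X}.

Lemma sig_eq_pi {T : Type} {P : T -> Prop} (a b : sig P) :
  proj1_sig a = proj1_sig b -> a = b.
Proof.
  destruct a as [a Ha], b as [b Hb]; simpl; intros ->.
  f_equal; apply proof_irrelevance.
Qed.

Definition slice_id (X : slice_ob) : slice_hom X X :=
  exist _ (idm (sl_obj X)) (comp_idr _ _ _ (sl_map X)).

Definition slice_comp (X Y Z : slice_ob) (h : slice_hom Y Z) (g : slice_hom X Y)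
  : slice_hom X Z.
Proof.
  exists (comp (proj1_sig h) (proj1_sig g)).
  rewrite comp_assoc, (proj2_sig h); exact (proj2_sig g).
Defined.

Arguments slice_comp {X Y Z} _ _.

Lemma slice_idl X Y (f : slice_hom X Y) : slice_comp (slice_id Y) f = f.
Proof. apply sig_eq_pi; simpl; apply comp_idl. Qed.
Lemma slice_idr X Y (f : slice_hom X Y) : slice_comp f (slice_id X) = f.
Proof. apply sig_eq_pi; simpl; apply comp_idr. Qed.
Lemma slice_assoc W X Y Z (f : slice_hom W X) (g : slice_hom X Y) (h : slice_hom Y Z) :
  slice_comp h (slice_comp g f) = slice_comp (slice_comp h g) f.
Proof. apply sig_eq_pi; simpl; apply comp_assoc. Qed.

Definition slice_cat : Category :=
  {| Ob := slice_ob; Hom := slice_hom; idm := slice_id; comp := @slice_comp;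
     comp_idl := slice_idl; comp_idr := slice_idr; comp_assoc := slice_assoc |}.

Definition slice : FCat :=
  {| fcat := slice_cat;
     fib := fun X Y (h : slice_hom X Y) => fib (proj1_sig h);
     weq := fun X Y (h : slice_hom X Y) => weq (proj1_sig h) |}.

End Slice.

(** Morphisms x -> y are zigzags (finite composable strings of morphisms of C
    and formal inverses of weak equivalences), modulo the smallest congruence
    identifying composites/identities of C and making the formal inverses
    two-sided inverses. *)

Inductive zigzag (C : FCat) : Ob C -> Ob C -> Type :=
| zz_nil : forall x, zigzag C x x
| zz_fwd : forall x y z, Hom x y -> zigzag C y z -> zigzag C x z
| zz_bwd : forall x y z (w : Hom y x), weq w -> zigzag C y z -> zigzag C x z.

Arguments zz_nil {C} x.
Arguments zz_fwd {C x y z} _ _.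
Arguments zz_bwd {C x y z} _ _ _.

Fixpoint zz_app {C : FCat} {x y z : Ob C} (p : zigzag C x y) : zigzag C y z -> zigzag C x z :=
  match p in zigzag _ x y return zigzag C y z -> zigzag C x z with
  | zz_nil _ => fun q => q
  | zz_fwd f p' => fun q => zz_fwd f (zz_app p' q)
  | zz_bwd w Hw p' => fun q => zz_bwd w Hw (zz_app p' q)
  end.

Inductive zz_rel (C : FCat) : forall x y : Ob C, zigzag C x y -> zigzag C x y -> Prop :=
| zr_refl : forall x y (p : zigzag C x y), zz_rel C x y p p
| zr_sym : forall x y (p q : zigzag C x y), zz_rel C x y p q -> zz_rel C x y q p
| zr_trans : forall x y (p q r : zigzag C x y),
    zz_rel C x y p q -> zz_rel C x y q r -> zz_rel C x y p r
| zr_cong : forall x y z (p p' : zigzag C x y) (q q' : zigzag C y z),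
    zz_rel C x y p p' -> zz_rel C y z q q' -> zz_rel C x z (zz_app p q) (zz_app p' q')
| zr_id : forall x, zz_rel C x x (zz_fwd (idm x) (zz_nil x)) (zz_nil x)
| zr_comp : forall x y z (f : Hom x y) (g : Hom y z),
    zz_rel C x z (zz_fwd f (zz_fwd g (zz_nil z))) (zz_fwd (comp g f) (zz_nil z))
| zr_inv_l : forall x y (w : Hom y x) (Hw : weq w),
    zz_rel C x x (zz_bwd w Hw (zz_fwd w (zz_nil x))) (zz_nil x)
| zr_inv_r : forall x y (w : Hom y x) (Hw : weq w),
    zz_rel C y y (zz_fwd w (zz_bwd w Hw (zz_nil y))) (zz_nil y).

Arguments zz_rel {C x y} _ _.

(** F induces an equivalence of homotopy categories: there is a functor
    G : Ho(C) -> Ho(D) with G o gamma_C = gamma_D o F, and G is an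
    equivalence (fully faithful and essentially surjective). *)
Definition HoEquivalence {C D : FCat} (F : Functor C D) : Prop :=
  exists G : forall x y : Ob C, zigzag C x y -> zigzag D (fob F x) (fob F y),
    (forall x y (p q : zigzag C x y), zz_rel p q -> zz_rel (G x y p) (G x y q)) /\
    (forall x, zz_rel (G x x (zz_nil x)) (zz_nil (fob F x))) /\
    (forall x y z (p : zigzag C x y) (q : zigzag C y z),
        zz_rel (G x z (zz_app p q)) (zz_app (G x y p) (G y z q))) /\
    (forall x y (f : Hom x y),
        zz_rel (G x y (zz_fwd f (zz_nil y))) (zz_fwd (fmor F f) (zz_nil (fob F y)))) /\
    (forall x y (q : zigzag D (fob F x) (fob F y)), exists p, zz_rel (G x y p) q) /\
    (forall x y (p p' : zigzag C x y), zz_rel (G x y p) (G x y p') -> zz_rel p p') /\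
    (forall d : Ob D, exists (c : Ob C) (u : zigzag D (fob F c) d) (v : zigzag D d (fob F c)),
        zz_rel (zz_app u v) (zz_nil (fob F c)) /\ zz_rel (zz_app v u) (zz_nil d)).

Definition IsExact {C D : FCat} (F : Functor C D) : Prop :=
  (forall (x y : Ob C) (f : Hom x y), fib f -> fib (fmor F f)) /\
  (forall (x y : Ob C) (f : Hom x y), fib f -> weq f -> fib (fmor F f) /\ weq (fmor F f)) /\
  (forall (X A B P : Ob C) (p : Hom X B) (f : Hom A B) (p' : Hom P A) (g : Hom P X),
      fib p -> IsPullback p f p' g ->
      IsPullback (fmor F p) (fmor F f) (fmor F p') (fmor F g)) /\
  (forall t : Ob C, IsTerminal t -> IsTerminal (fob F t)).

Definition IsWeakEquivalenceFC {C D : FCat} (F : Functor C D) : Prop :=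
  IsExact F /\ HoEquivalence F.

(** Fs is a pullback functor f^* : (C ->> B) -> (C ->> A): it sends each
    fibration p : X ->> B to (the projection of) a chosen pullback of p along f,
    and each morphism over B to the induced morphism between pullbacks. *)
Definition IsPullbackFunctor {C : FCat} {A B : Ob C} (f : Hom A B)
  (Fs : Functor (slice C B) (slice C A)) : Prop :=
  exists gs : forall X : slice_ob C B, Hom (sl_obj C A (fob Fs X)) (sl_obj C B X),
    (forall X : slice_ob C B,
        IsPullback (sl_map C B X) f (sl_map C A (fob Fs X)) (gs X)) /\
    (forall (X Y : slice_ob C B) (h : slice_hom C B X Y),
        comp (gs Y) (proj1_sig (@fmor _ _ Fs X Y h)) = comp (proj1_sig h) (gs X)).

(** The pullback functor [f^*] is right adjoint to [f_!], postcomposition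
    with [f].  The counit [f_! f^* X -> X] is a pullback of the acyclic
    fibration [f], hence a weak equivalence, and the unit [d -> f^* f_! d] is a
    section of a counit, hence a weak equivalence by 2-out-of-6.  An adjunction
    whose unit and counit are weak equivalences induces inverse equivalences of
    homotopy categories.  Exactness also comes from the adjunction: a right
    adjoint preserves pullbacks and the terminal object, and by pullback
    pasting [f^* h] is a pullback of [h], so it is an (acyclic) fibration
    whenever [h] is. *)

From Stdlib Require Import Setoid Morphisms ClassicalEpsilon.

#[export] Instance zz_rel_Equivalence (C : FCat) (x y : Ob C) :
  Equivalence (@zz_rel C x y).
Proof. split; intro; intros; eauto using zr_refl, zr_sym, zr_trans. Qed.

#[export] Instance zz_app_Proper (C : FCat) (x y z : Ob C) :
  Proper (zz_rel ==> zz_rel ==> zz_rel) (@zz_app C x y z).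
Proof. intros p p' Hp q q' Hq; exact (zr_cong _ _ _ _ _ _ _ _ Hp Hq). Qed.

Section Zigzags.
Context {C : FCat}.

Lemma zz_app_nil_r {x y : Ob C} (p : zigzag C x y) : zz_app p (zz_nil y) = p.
Proof. induction p; simpl; try rewrite IHp; reflexivity. Qed.

Lemma zz_app_assoc {x y z w : Ob C} (p : zigzag C x y) (q : zigzag C y z)
  (r : zigzag C z w) : zz_app p (zz_app q r) = zz_app (zz_app p q) r.
Proof. induction p; simpl; try rewrite IHp; reflexivity. Qed.

Definition zz_mor {x y : Ob C} (f : Hom x y) : zigzag C x y := zz_fwd f (zz_nil y).

Definition zz_inv {x y : Ob C} (w : Hom y x) (Hw : weq w) : zigzag C x y :=
  zz_bwd w Hw (zz_nil y).

Lemma zz_fwd_app {x y z : Ob C} (f : Hom x y) (p : zigzag C y z) :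
  zz_fwd f p = zz_app (zz_mor f) p.
Proof. reflexivity. Qed.

Lemma zz_bwd_app {x y z : Ob C} (w : Hom y x) (Hw : weq w) (p : zigzag C y z) :
  zz_bwd w Hw p = zz_app (zz_inv w Hw) p.
Proof. reflexivity. Qed.

Lemma zz_mor_comp {x y z : Ob C} (f : Hom x y) (g : Hom y z) :
  zz_rel (zz_app (zz_mor f) (zz_mor g)) (zz_mor (comp g f)).
Proof. apply zr_comp. Qed.

Lemma zz_mor_id (x : Ob C) : zz_rel (zz_mor (idm x)) (zz_nil x).
Proof. apply zr_id. Qed.

Lemma zz_mor_inv {x y : Ob C} (w : Hom y x) (Hw : weq w) :
  zz_rel (zz_app (zz_mor w) (zz_inv w Hw)) (zz_nil y).
Proof. apply zr_inv_r. Qed.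

Lemma zz_inv_mor {x y : Ob C} (w : Hom y x) (Hw : weq w) :
  zz_rel (zz_app (zz_inv w Hw) (zz_mor w)) (zz_nil x).
Proof. apply zr_inv_l. Qed.

Lemma zz_mor_cancel_l {x y z : Ob C} (w : Hom y x) (Hw : weq w) (p q : zigzag C x z) :
  zz_rel (zz_app (zz_mor w) p) (zz_app (zz_mor w) q) -> zz_rel p q.
Proof.
  intro E.
  assert (E' := zr_cong _ _ _ _ _ _ _ _ (zr_refl _ _ _ (zz_inv w Hw)) E).
  rewrite !zz_app_assoc, !zz_inv_mor in E'. exact E'.
Qed.

Lemma zz_square_inv {x' y' x y : Ob C} (a : Hom y' x') (Ha : weq a) (b : Hom y x)
  (Hb : weq b) (c : Hom x' x) (d : Hom y' y) : comp c a = comp b d ->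
  zz_rel (zz_app (zz_mor c) (zz_inv b Hb)) (zz_app (zz_inv a Ha) (zz_mor d)).
Proof.
  intro E.
  transitivity (zz_app (zz_app (zz_inv a Ha) (zz_mor a))
                       (zz_app (zz_mor c) (zz_inv b Hb))).
  { rewrite zz_inv_mor. reflexivity. }
  rewrite <- zz_app_assoc, (zz_app_assoc (zz_mor a)), zz_mor_comp, E, <- zz_mor_comp.
  rewrite <- zz_app_assoc, zz_mor_inv, zz_app_nil_r. reflexivity.
Qed.

Lemma zz_inv_inverse {x y : Ob C} (a : Hom x y) (b : Hom y x) (Ha : weq a) (Hb : weq b) :
  zz_rel (zz_app (zz_mor a) (zz_mor b)) (zz_nil x) ->
  zz_rel (zz_app (zz_inv b Hb) (zz_inv a Ha)) (zz_nil x).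
Proof.
  intro E.
  transitivity (zz_app (zz_app (zz_mor a) (zz_mor b)) (zz_app (zz_inv b Hb) (zz_inv a Ha))).
  { rewrite E. reflexivity. }
  rewrite <- !zz_app_assoc, (zz_app_assoc (zz_mor b)), zz_mor_inv. apply zz_mor_inv.
Qed.

End Zigzags.

Definition PreservesWeq {C D : FCat} (F : Functor C D) : Prop :=
  forall x y (w : Hom x y), weq w -> weq (fmor F w).

Fixpoint zz_map {C D : FCat} (F : Functor C D) (HF : PreservesWeq F) {x y : Ob C}
  (p : zigzag C x y) : zigzag D (fob F x) (fob F y) :=
  match p in zigzag _ x y return zigzag D (fob F x) (fob F y) with
  | zz_nil x => zz_nil (fob F x)
  | zz_fwd f p' => zz_fwd (fmor F f) (zz_map F HF p')
  | zz_bwd w Hw p' => zz_bwd (fmor F w) (HF _ _ w Hw) (zz_map F HF p')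
  end.

Definition functor_comp {C D E : Category} (G : Functor D E) (F : Functor C D) :
  Functor C E.
Proof.
  refine {| fob := fun x => fob G (fob F x); fmor := fun x y h => fmor G (fmor F h) |}.
  - intro x. rewrite !fmor_id. reflexivity.
  - intros. rewrite !fmor_comp. reflexivity.
Defined.

Definition functor_id (C : Category) : Functor C C.
Proof. refine {| fob := fun x => x; fmor := fun x y h => h |}; reflexivity. Defined.

(* Transparent, so that [zz_map] along a composite functor computes. *)
Definition preserves_weq_comp {C D E : FCat} (G : Functor D E) (F : Functor C D)
  (HG : PreservesWeq G) (HF : PreservesWeq F) : PreservesWeq (functor_comp G F) :=
  fun x y w Hw => HG _ _ _ (HF x y w Hw).

Definition preserves_weq_id (C : FCat) : PreservesWeq (functor_id C) :=
  fun x y w Hw => Hw.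

Section ZigzagMap.
Context {C D : FCat}.

Lemma zz_map_app (F : Functor C D) HF {x y z : Ob C} (p : zigzag C x y)
  (q : zigzag C y z) : zz_map F HF (zz_app p q) = zz_app (zz_map F HF p) (zz_map F HF q).
Proof. induction p; simpl; try rewrite IHp; reflexivity. Qed.

Lemma zz_map_rel (F : Functor C D) HF {x y : Ob C} (p q : zigzag C x y) :
  zz_rel p q -> zz_rel (zz_map F HF p) (zz_map F HF q).
Proof.
  induction 1; simpl.
  - reflexivity.
  - symmetry; assumption.
  - etransitivity; eassumption.
  - rewrite !zz_map_app. apply zr_cong; assumption.
  - rewrite fmor_id. apply zr_id.
  - rewrite fmor_comp. apply zr_comp.
  - apply zr_inv_l.
  - apply zr_inv_r.
Qed.

Lemma zz_map_id {x y : Ob C} (p : zigzag C x y) :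
  zz_map (functor_id C) (preserves_weq_id C) p = p.
Proof. induction p; simpl; try rewrite IHp; reflexivity. Qed.

Lemma zz_map_comp {E : FCat} (G : Functor D E) (F : Functor C D) HG HF {x y : Ob C}
  (p : zigzag C x y) :
  zz_map (functor_comp G F) (preserves_weq_comp G F HG HF) p = zz_map G HG (zz_map F HF p).
Proof. induction p; simpl; try rewrite IHp; reflexivity. Qed.

Lemma zz_map_natural (P Q : Functor C D) HP HQ (e : forall x, Hom (fob P x) (fob Q x))
  (He : forall x y (h : Hom x y), comp (e y) (fmor P h) = comp (fmor Q h) (e x))
  {x y : Ob C} (p : zigzag C x y) :
  zz_rel (zz_app (zz_mor (e x)) (zz_map Q HQ p)) (zz_app (zz_map P HP p) (zz_mor (e y))).
Proof.
  induction p as [x|x y z h p IH|x y z w Hw p IH]; cbn [zz_map].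
  - reflexivity.
  - rewrite zz_fwd_app, zz_app_assoc, zz_mor_comp, <- He, <- zz_mor_comp,
      <- zz_app_assoc, IH, zz_app_assoc.
    reflexivity.
  - rewrite zz_bwd_app, zz_app_assoc,
      (zz_square_inv (fmor P w) (HP _ _ w Hw) (fmor Q w) (HQ _ _ w Hw) (e x) (e y) (He _ _ w)),
      <- zz_app_assoc, IH, zz_app_assoc.
    reflexivity.
Qed.

End ZigzagMap.

Record IsAdjunction {C D : Category} (L : Functor D C) (R : Functor C D)
  (eta : forall d, Hom d (fob R (fob L d))) (eps : forall c, Hom (fob L (fob R c)) c)
  : Prop := {
  adj_unit_natural : forall d d' (h : Hom d d'),
    comp (eta d') h = comp (fmor R (fmor L h)) (eta d);
  adj_counit_natural : forall c c' (h : Hom c c'),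
    comp (eps c') (fmor L (fmor R h)) = comp h (eps c);
  adj_triangle_R : forall c, comp (fmor R (eps c)) (eta (fob R c)) = idm (fob R c);
  adj_triangle_L : forall d, comp (eps (fob L d)) (fmor L (eta d)) = idm (fob L d) }.

Arguments adj_unit_natural {C D L R eta eps} _ _ _ _.
Arguments adj_counit_natural {C D L R eta eps} _ _ _ _.
Arguments adj_triangle_R {C D L R eta eps} _ _.
Arguments adj_triangle_L {C D L R eta eps} _ _.

Section WeakAdjunction.
Variables (C D : FCat) (L : Functor D C) (R : Functor C D).
Variables (eta : forall d, Hom d (fob R (fob L d))) (eps : forall c, Hom (fob L (fob R c)) c).
Hypothesis adj : IsAdjunction L R eta eps.
Hypotheses (HL : PreservesWeq L) (HR : PreservesWeq R).
Hypotheses (Weta : forall d, weq (eta d)) (Weps : forall c, weq (eps c)).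

Lemma zz_counit_natural {x y : Ob C} (p : zigzag C x y) :
  zz_rel (zz_app (zz_mor (eps x)) p) (zz_app (zz_map L HL (zz_map R HR p)) (zz_mor (eps y))).
Proof.
  rewrite <- (zz_map_id p) at 1. rewrite <- (zz_map_comp L R HL HR).
  apply (zz_map_natural (functor_comp L R) (functor_id C) _ _ eps (adj_counit_natural adj)).
Qed.

Lemma zz_unit_natural {x y : Ob D} (q : zigzag D x y) :
  zz_rel (zz_app (zz_mor (eta x)) (zz_map R HR (zz_map L HL q))) (zz_app q (zz_mor (eta y))).
Proof.
  rewrite <- (zz_map_comp R L HR HL). rewrite <- (zz_map_id q) at 2.
  apply (zz_map_natural (functor_id D) (functor_comp R L) _ _ eta (adj_unit_natural adj)).
Qed.

Lemma zz_map_full {x y : Ob C} (q : zigzag D (fob R x) (fob R y)) :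
  exists p, zz_rel (zz_map R HR p) q.
Proof.
  exists (zz_app (zz_inv (eps x) (Weps x)) (zz_app (zz_map L HL q) (zz_mor (eps y)))).
  rewrite !zz_map_app.
  change (zz_map R HR (zz_inv (eps x) (Weps x)))
    with (zz_inv (fmor R (eps x)) (HR _ _ _ (Weps x))).
  change (zz_map R HR (zz_mor (eps y))) with (zz_mor (fmor R (eps y))).
  assert (E : zz_rel (zz_map R HR (zz_map L HL q))
    (zz_app (zz_inv (eta (fob R x)) (Weta _)) (zz_app q (zz_mor (eta (fob R y)))))).
  { rewrite <- zz_unit_natural, zz_app_assoc, zz_inv_mor. reflexivity. }
  assert (triangle : forall c, zz_rel (zz_app (zz_mor (eta (fob R c))) (zz_mor (fmor R (eps c))))
                               (zz_nil (fob R c))).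
  { intro c. rewrite zz_mor_comp, (adj_triangle_R adj). apply zz_mor_id. }
  rewrite E, <- !zz_app_assoc, triangle, zz_app_nil_r, zz_app_assoc, zz_inv_inverse by apply triangle.
  reflexivity.
Qed.

Lemma zz_map_faithful {x y : Ob C} (p p' : zigzag C x y) :
  zz_rel (zz_map R HR p) (zz_map R HR p') -> zz_rel p p'.
Proof.
  intro E. apply (zz_mor_cancel_l (eps x) (Weps x)).
  rewrite !zz_counit_natural, (zz_map_rel L HL _ _ E). reflexivity.
Qed.

Lemma ho_equivalence_of_weq_adjunction : HoEquivalence R.
Proof.
  exists (fun x y p => zz_map R HR p).
  split; [|split; [|split; [|split; [|split; [|split]]]]].
  - intros; apply zz_map_rel; assumption.
  - intros; reflexivity.
  - intros; rewrite zz_map_app; reflexivity.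
  - intros; reflexivity.
  - intros x y q; apply zz_map_full.
  - intros x y p p'; apply zz_map_faithful.
  - intro d. exists (fob L d), (zz_inv (eta d) (Weta d)), (zz_mor (eta d)).
    split; [apply zz_inv_mor | apply zz_mor_inv].
Qed.

End WeakAdjunction.

Section Pullbacks.
Context {C : Category}.

Lemma pullback_sym {X A B P : Ob C} {p : Hom X B} {f : Hom A B} {p' : Hom P A}
  {g : Hom P X} : IsPullback p f p' g -> IsPullback f p g p'.
Proof.
  intros [E U]. split; [symmetry; exact E|].
  intros Q a x Ex. destruct (U Q x a (eq_sym Ex)) as [u [[H1 H2] H3]].
  exists u. split; [split; assumption|]. intros v V1 V2. apply H3; assumption.
Qed.

Lemma pullback_hom_ext {X A B P : Ob C} {p : Hom X B} {f : Hom A B} {p' : Hom P A}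
  {g : Hom P X} : IsPullback p f p' g ->
  forall Q (u v : Hom Q P), comp p' u = comp p' v -> comp g u = comp g v -> u = v.
Proof.
  intros [E U] Q u v E1 E2.
  destruct (U Q (comp p' v) (comp g v)) as [w [_ Hw]].
  { rewrite !comp_assoc, E. reflexivity. }
  rewrite (Hw u E1 E2). symmetry. apply Hw; reflexivity.
Qed.

Lemma pullback_paste_left {X Y B P Q A : Ob C} (h : Hom X Y) (q : Hom Y B) (f : Hom A B)
  (s : Hom Q A) (k : Hom Q Y) (t : Hom P Q) (g : Hom P X) :
  IsPullback q f s k -> IsPullback (comp q h) f (comp s t) g ->
  comp h g = comp k t -> IsPullback h k t g.
Proof.
  intros lower outer sq. split; [exact sq|].
  intros Z a x Hax.
  destruct (proj2 outer Z (comp s a) x) as [u [[Hu1 Hu2] Hu_uniq]].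
  { rewrite <- comp_assoc, Hax, !comp_assoc, (proj1 lower). reflexivity. }
  exists u. split; [split|].
  - apply (pullback_hom_ext lower).
    + rewrite comp_assoc. exact Hu1.
    + rewrite comp_assoc, <- sq, <- comp_assoc, Hu2. exact Hax.
  - exact Hu2.
  - intros v Hv1 Hv2. apply Hu_uniq; [rewrite <- comp_assoc, Hv1; reflexivity | exact Hv2].
Qed.

End Pullbacks.

Section RightAdjoint.
Variables (C D : Category) (L : Functor D C) (R : Functor C D).
Variables (eta : forall d, Hom d (fob R (fob L d))) (eps : forall c, Hom (fob L (fob R c)) c).
Hypothesis adj : IsAdjunction L R eta eps.

Definition transpose {d c} (u : Hom (fob L d) c) : Hom d (fob R c) :=
  comp (fmor R u) (eta d).

Definition untranspose {d c} (v : Hom d (fob R c)) : Hom (fob L d) c :=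
  comp (eps c) (fmor L v).

Lemma transpose_untranspose {d c} (v : Hom d (fob R c)) : transpose (untranspose v) = v.
Proof.
  unfold untranspose, transpose.
  rewrite fmor_comp, <- comp_assoc, <- (adj_unit_natural adj), comp_assoc,
    (adj_triangle_R adj).
  apply comp_idl.
Qed.

Lemma transpose_comp {d c c'} (h : Hom c c') (u : Hom (fob L d) c) :
  transpose (comp h u) = comp (fmor R h) (transpose u).
Proof. unfold transpose. rewrite fmor_comp. apply eq_sym, comp_assoc. Qed.

Lemma untranspose_comp {d c c'} (h : Hom c c') (v : Hom d (fob R c)) :
  untranspose (comp (fmor R h) v) = comp h (untranspose v).
Proof.
  unfold untranspose.
  rewrite fmor_comp, comp_assoc, (adj_counit_natural adj). apply eq_sym, comp_assoc.
Qed.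

Lemma right_adjoint_preserves_pullback {X A B P : Ob C} (p : Hom X B) (f : Hom A B)
  (p' : Hom P A) (g : Hom P X) :
  IsPullback p f p' g -> IsPullback (fmor R p) (fmor R f) (fmor R p') (fmor R g).
Proof.
  intros pb. split.
  { rewrite <- !fmor_comp, (proj1 pb). reflexivity. }
  intros Q a x Hax.
  destruct (proj2 pb (fob L Q) (untranspose a) (untranspose x)) as [w [[Hw1 Hw2] Hw_uniq]].
  { rewrite <- !untranspose_comp, Hax. reflexivity. }
  exists (transpose w). split; [split|].
  - rewrite <- transpose_comp, Hw1. apply transpose_untranspose.
  - rewrite <- transpose_comp, Hw2. apply transpose_untranspose.
  - intros v Hv1 Hv2.
    rewrite <- (transpose_untranspose v). f_equal.
    apply Hw_uniq; rewrite <- untranspose_comp; f_equal; assumption.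
Qed.

Lemma right_adjoint_preserves_terminal (t : Ob C) :
  IsTerminal t -> IsTerminal (fob R t).
Proof.
  intros Ht Q. destruct (Ht (fob L Q)) as [k Hk].
  exists (transpose k). intro v.
  rewrite <- (transpose_untranspose v), (Hk (untranspose v)). reflexivity.
Qed.

End RightAdjoint.

Lemma weq_cancel_r {C : FCat} (HC : IsFibrationCategory C) {x y z : Ob C}
  (u : Hom x y) (g : Hom y z) : weq g -> weq (comp g u) -> weq u.
Proof.
  intros Hg Hgu.
  apply (fc_2of6 C HC x y z z u g (idm z) Hgu).
  rewrite comp_idl. exact Hg.
Qed.

Lemma slice_hom_comm {C : FCat} {A : Ob C} {X Y : slice_ob C A} (h : slice_hom C A X Y) :
  comp (sl_map C A Y) (proj1_sig h) = sl_map C A X.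
Proof. exact (proj2_sig h). Qed.

Section PullbackFunctor.
Variables (C : FCat) (HC : IsFibrationCategory C) (A B : Ob C) (f : Hom A B).
Hypothesis Hf : fib f.

Definition postcomp_ob (X : slice_ob C A) : slice_ob C B :=
  existT _ (sl_obj C A X)
    (exist _ (comp f (sl_map C A X))
       (fc_fib_comp C HC _ _ _ (sl_map C A X) f (proj2_sig (projT2 X)) Hf)).

Definition postcomp_hom (X Y : slice_ob C A) (h : slice_hom C A X Y) :
  slice_hom C B (postcomp_ob X) (postcomp_ob Y).
Proof.
  exists (proj1_sig h).
  change (comp (comp f (sl_map C A Y)) (proj1_sig h) = comp f (sl_map C A X)).
  rewrite <- comp_assoc, slice_hom_comm. reflexivity.
Defined.

Definition postcomp_functor : Functor (slice C A) (slice C B).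
Proof.
  refine (Build_Functor (slice C A) (slice C B) postcomp_ob postcomp_hom _ _);
    intros; apply sig_eq_pi; reflexivity.
Defined.

Lemma postcomp_preserves_weq : PreservesWeq postcomp_functor.
Proof. intros X Y w Hw. exact Hw. Qed.

Variables (Fs : Functor (slice C B) (slice C A))
  (gs : forall X : slice_ob C B, Hom (sl_obj C A (fob Fs X)) (sl_obj C B X)).
Hypothesis Hpb : forall X : slice_ob C B,
  IsPullback (sl_map C B X) f (sl_map C A (fob Fs X)) (gs X).
Hypothesis Hnat : forall (X Y : slice_ob C B) (h : slice_hom C B X Y),
  comp (gs Y) (proj1_sig (fmor Fs h)) = comp (proj1_sig h) (gs X).

Lemma pullback_section_exists (d : slice_ob C A) :
  exists u : Hom (sl_obj C A d) (sl_obj C A (fob Fs (postcomp_ob d))),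
    comp (sl_map C A (fob Fs (postcomp_ob d))) u = sl_map C A d /\
    comp (gs (postcomp_ob d)) u = idm (sl_obj C A d).
Proof.
  destruct (proj2 (Hpb (postcomp_ob d)) (sl_obj C A d) (sl_map C A d) (idm _))
    as [u [Hu _]].
  { rewrite comp_idr. reflexivity. }
  exists u. exact Hu.
Qed.

Definition unit_hom (d : slice_ob C A) :=
  proj1_sig (constructive_indefinite_description _ (pullback_section_exists d)).

Lemma unit_hom_spec (d : slice_ob C A) :
  comp (sl_map C A (fob Fs (postcomp_ob d))) (unit_hom d) = sl_map C A d /\
  comp (gs (postcomp_ob d)) (unit_hom d) = idm (sl_obj C A d).
Proof. exact (proj2_sig (constructive_indefinite_description _ (pullback_section_exists d))). Qed.

Definition pullback_unit (d : slice_ob C A) : slice_hom C A d (fob Fs (postcomp_ob d)) :=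
  exist _ (unit_hom d) (proj1 (unit_hom_spec d)).

Definition pullback_counit (X : slice_ob C B) :
  slice_hom C B (postcomp_ob (fob Fs X)) X :=
  exist _ (gs X) (proj1 (Hpb X)).

Lemma postcomp_pullback_adjunction :
  IsAdjunction postcomp_functor Fs pullback_unit pullback_counit.
Proof.
  split.
  - intros d d' h. apply sig_eq_pi.
    change (comp (unit_hom d') (proj1_sig h) =
            comp (proj1_sig (fmor Fs (postcomp_hom d d' h))) (unit_hom d)).
    destruct (unit_hom_spec d) as [E1 E2], (unit_hom_spec d') as [E1' E2'].
    apply (pullback_hom_ext (Hpb (postcomp_ob d'))).
    + rewrite !comp_assoc, E1', (slice_hom_comm (fmor Fs _)), E1.
      apply slice_hom_comm.
    + rewrite !comp_assoc, E2', comp_idl, Hnat, <- comp_assoc, E2, comp_idr.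
      reflexivity.
  - intros X Y h. apply sig_eq_pi. exact (Hnat X Y h).
  - intro X. apply sig_eq_pi.
    change (comp (proj1_sig (fmor Fs (pullback_counit X))) (unit_hom (fob Fs X)) =
            idm (sl_obj C A (fob Fs X))).
    destruct (unit_hom_spec (fob Fs X)) as [E1 E2].
    apply (pullback_hom_ext (Hpb X)).
    + rewrite comp_assoc, slice_hom_comm, E1, comp_idr. reflexivity.
    + rewrite comp_assoc, Hnat, <- comp_assoc, E2, !comp_idr. reflexivity.
  - intro d. apply sig_eq_pi. exact (proj2 (unit_hom_spec d)).
Qed.

Lemma pullback_functor_square (X Y : slice_ob C B) (h : slice_hom C B X Y) :
  IsPullback (proj1_sig h) (gs Y) (proj1_sig (fmor Fs h)) (gs X).
Proof.
  apply (pullback_paste_left _ (sl_map C B Y) f (sl_map C A (fob Fs Y))).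
  - exact (Hpb Y).
  - rewrite (slice_hom_comm h), (slice_hom_comm (fmor Fs h)). exact (Hpb X).
  - symmetry. apply Hnat.
Qed.

Lemma pullback_functor_exact : IsExact Fs.
Proof.
  split; [|split; [|split]].
  - intros X Y h Hh. exact (fc_pb_fib C HC _ _ _ _ _ _ _ _ Hh (pullback_functor_square X Y h)).
  - intros X Y h Hh Wh. split.
    + exact (fc_pb_fib C HC _ _ _ _ _ _ _ _ Hh (pullback_functor_square X Y h)).
    + exact (fc_pb_afib C HC _ _ _ _ _ _ _ _ Hh Wh (pullback_functor_square X Y h)).
  - intros X Y Z P p g p' g' _.
    exact (right_adjoint_preserves_pullback _ _ _ _ _ _ postcomp_pullback_adjunction
             p g p' g').
  - exact (right_adjoint_preserves_terminal _ _ _ _ _ _ postcomp_pullback_adjunction).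
Qed.

Hypothesis Wf : weq f.

Lemma pullback_counit_weq (X : slice_ob C B) : weq (gs X).
Proof. exact (fc_pb_afib C HC _ _ _ _ _ _ _ _ Hf Wf (pullback_sym (Hpb X))). Qed.

Lemma pullback_functor_preserves_weq : PreservesWeq Fs.
Proof.
  intros X Y w Hw. apply (weq_cancel_r HC _ (gs Y) (pullback_counit_weq Y)).
  rewrite Hnat. exact (fc_weq_comp C HC _ _ _ _ _ (pullback_counit_weq X) Hw).
Qed.

Lemma pullback_unit_weq (d : slice_ob C A) : weq (unit_hom d).
Proof.
  apply (weq_cancel_r HC _ (gs (postcomp_ob d)) (pullback_counit_weq _)).
  rewrite (proj2 (unit_hom_spec d)). apply (fc_weq_id C HC).
Qed.

Lemma pullback_functor_ho_equivalence : HoEquivalence Fs.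
Proof.
  exact (ho_equivalence_of_weq_adjunction _ _ _ _ _ _ postcomp_pullback_adjunction
           postcomp_preserves_weq pullback_functor_preserves_weq
           pullback_unit_weq pullback_counit_weq).
Qed.

End PullbackFunctor.

Theorem proposition2p7 :
  forall (C : FCat), IsFibrationCategory C ->
  forall (A B : Ob C) (f : Hom A B), fib f -> weq f ->
  forall Fs : Functor (slice C B) (slice C A),
    IsPullbackFunctor f Fs -> IsWeakEquivalenceFC Fs.
Proof.
  intros C HC A B f Hf Wf Fs [gs [Hpb Hnat]]. split.
  - exact (pullback_functor_exact C HC A B f Hf Fs gs Hpb Hnat).
  - exact (pullback_functor_ho_equivalence C HC A B f Hf Fs gs Hpb Hnat Wf).
Qed.
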